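(* Consider $\partial_t x = F_2 x^{\otimes 2}+F_1x+F_0$, and let $Q=I$ and pivot $s=x(0)$, so that $v(t)=x(t)-x(0)$ solves $\partial_tv=F_{2,s}v^{\otimes2}+F_{1,s}v+F_{0,s}$. Then $v(0)=0$, and there exists $t'>0$ such that $\|v(t)\|\le1$ for $t\le T\le t'$. In particular one may choose $t'=\frac{1}{\|F_{2,s}\|+\|F_{1,s}\|+\|F_{0,s}\|}$, and then for all $t<t'$, $$\|v(t)\|\le t\big(\|F_{2,s}\|+\|F_{1,s}\|+\|F_{0,s}\|\big)<1.$$
   Context: Setting: $x(t)\in\mathbb{R}^n$, $F_2\in\mathbb{R}^{n\times n^2}$, $F_1\in\mathbb{R}^{n\times n}$, $F_0\in\mathbb{R}^n$, Kronecker product $\otimes$; $F_{2,s}=F_2$, $F_{1,s}=F_1+F_2(s\otimes I_n+I_n\otimes s)$, $F_{0,s}=F_2s^{\otimes2}+F_1s+F_0$; $\|\cdot\|$ is the Euclidean norm / induced operator norm; $t\ge0$. *)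

From HB Require Import structures.
From mathcomp Require Import all_boot all_order all_algebra.
From mathcomp Require Import all_classical all_reals all_analysis.
Set Implicit Arguments. Unset Strict Implicit. Unset Printing Implicit Defensive.
Import Order.TTheory GRing.Theory Num.Theory.
Import numFieldNormedType.Exports.
Local Open Scope ring_scope.
Local Open Scope classical_set_scope.

Section Defs.
Variable R : realType.

Definition enorm (m n : nat) (A : 'M[R]_(m, n)) : R :=
  Num.sqrt (\sum_i \sum_j A i j ^+ 2).

Definition opnorm (m n : nat) (A : 'M[R]_(m, n)) : R :=
  sup [set enorm (A *m x) | x in [set x : 'cV[R]_n | enorm x <= 1]].

(* Kronecker product: (A (x) B) at row (i1,i2), column (j1,j2) equals
   A i1 j1 * B i2 j2, with pairs enumerated lexicographically
   (mxvec_index i1 i2 = i1 * m2 + i2). *)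
(* Inverse of mxvec_index: the pair (i, j) indexed by k : 'I_(m * n). *)
Definition unvec_index (m n : nat) (k : 'I_(m * n)) : 'I_m * 'I_n :=
  enum_val (cast_ord (esym (mxvec_cast m n)) k).

Definition kron (m1 n1 m2 n2 : nat) (A : 'M[R]_(m1, n1)) (B : 'M[R]_(m2, n2))
  : 'M[R]_(m1 * m2, n1 * n2) :=
  \matrix_(i, j) (A (unvec_index i).1 (unvec_index j).1 *
                  B (unvec_index i).2 (unvec_index j).2).
End Defs.

Definition kronv (R : realType) (n : nat) (x y : 'cV[R]_n) : 'cV[R]_(n * n) :=
  castmx (erefl, muln1 1) (kron x y).

Definition kron_vI (R : realType) (n : nat) (s : 'cV[R]_n) : 'M[R]_(n * n, n) :=
  castmx (erefl, mul1n n) (kron s (1%:M : 'M[R]_n)).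
Definition kron_Iv (R : realType) (n : nat) (s : 'cV[R]_n) : 'M[R]_(n * n, n) :=
  castmx (erefl, muln1 n) (kron (1%:M : 'M[R]_n) s).

Definition F2s (R : realType) (n : nat) (F2 : 'M[R]_(n, n * n)) := F2.
Definition F1s (R : realType) (n : nat) (F2 : 'M[R]_(n, n * n)) (F1 : 'M[R]_n)
  (s : 'cV[R]_n) : 'M[R]_n :=
  F1 + F2 *m (kron_vI s + kron_Iv s).
Definition F0s (R : realType) (n : nat) (F2 : 'M[R]_(n, n * n)) (F1 : 'M[R]_n)
  (F0 : 'cV[R]_n) (s : 'cV[R]_n) : 'cV[R]_n :=
  F2 *m kronv s s + F1 *m s + F0.

(* Expanding the Kronecker square of [v + s] gives the shifted equation.
   While [v] stays in the unit ball its right-hand side has norm at most [C],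
   since [|v (x) v| = |v|^2 <= 1], so the mean value inequality gives
   [|v t| <= t C] up to the first time [m] at which [|v|] reaches [1].  For
   [m < 1/C] this yields [|v m| <= m C < 1], so by continuity [|v| < 1]
   slightly beyond [m]; hence no such time exists before [1/C]. *)

From HB Require Import structures.
From mathcomp Require Import all_boot all_order all_algebra.
From mathcomp Require Import all_classical all_reals all_analysis.
From mathcomp Require Import ring lra.
Set Implicit Arguments.
Unset Strict Implicit.
Unset Printing Implicit Defensive.
Import Order.TTheory GRing.Theory Num.Theory.
Import numFieldNormedType.Exports.
Local Open Scope ring_scope.
Local Open Scope classical_set_scope.

Lemma klipschitz_continuous (R : realFieldType) (V W : normedModType R) (k : R)
    (f : V -> W) :
  k.-lipschitz f -> continuous f.
Proof.
move=> f_lip x; apply/cvgrPdist_lt => e e_gt0.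
have k1_gt0 : 0 < `|k| + 1 by rewrite ltr_wpDl.
near=> y; rewrite (le_lt_trans (f_lip (x, y) _)) //=.
rewrite (@le_lt_trans _ _ ((`|k| + 1) * `|x - y|)) //.
  by rewrite ler_wpM2r // (le_trans (ler_norm _)) // lerDl.
rewrite -ltr_pdivlMl // mulrC; near: y.
by apply: cvgr_dist_lt; rewrite ?divr_gt0.
Unshelve. all: by end_near.
Qed.

Lemma enorm_ge0 (R : realType) m n (A : 'M[R]_(m, n)) : 0 <= enorm A.
Proof. exact: sqrtr_ge0. Qed.

Section EuclideanNorm.
Context {R : realType} {n : nat}.
Implicit Types (a b c : 'cV[R]_n) (k : R).

Definition dot a b := \sum_i a i 0 * b i 0.

Lemma dotC a b : dot a b = dot b a.
Proof. by apply: eq_bigr => i _; rewrite mulrC. Qed.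

Lemma dotDl a b c : dot (a + b) c = dot a c + dot b c.
Proof. by rewrite /dot -big_split; apply: eq_bigr => i _; rewrite mxE mulrDl. Qed.

Lemma dotDr a b c : dot a (b + c) = dot a b + dot a c.
Proof. by rewrite dotC dotDl !(dotC a). Qed.

Lemma dotZl k a b : dot (k *: a) b = k * dot a b.
Proof. by rewrite /dot big_distrr; apply: eq_bigr => i _; rewrite mxE -mulrA. Qed.

Lemma dotZr k a b : dot a (k *: b) = k * dot a b.
Proof. by rewrite dotC dotZl dotC. Qed.

Lemma dotNl a b : dot (- a) b = - dot a b.
Proof. by rewrite -scaleN1r dotZl mulN1r. Qed.

Lemma dotBl a b c : dot (a - b) c = dot a c - dot b c.
Proof. by rewrite dotDl dotNl. Qed.

Lemma dotBr a b c : dot a (b - c) = dot a b - dot a c.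
Proof. by rewrite dotC dotBl !(dotC a). Qed.

Lemma dot0r a : dot a 0 = 0.
Proof. by rewrite -(scale0r 0) dotZr mul0r. Qed.

Lemma dot_ge0 a : 0 <= dot a a.
Proof. by apply: sumr_ge0 => i _; rewrite -expr2 sqr_ge0. Qed.

Lemma dot_eq0 a : (dot a a == 0) = (a == 0).
Proof.
apply/idP/eqP => [|->]; last by rewrite dot0r.
rewrite psumr_eq0 => [/allP a0|i _]; last by rewrite -expr2 sqr_ge0.
apply/matrixP => i j; rewrite (ord1 j) mxE.
by apply/eqP; rewrite -sqrf_eq0 expr2; exact: a0 (mem_index_enum i).
Qed.

Lemma enormE a : enorm a = Num.sqrt (dot a a).
Proof. by congr Num.sqrt; apply: eq_bigr => i _; rewrite big_ord1 expr2. Qed.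

Lemma enorm_sqr a : enorm a ^+ 2 = dot a a.
Proof. by rewrite enormE sqr_sqrtr ?dot_ge0. Qed.

Lemma enorm_eq0 a : (enorm a == 0) = (a == 0).
Proof. by rewrite enormE sqrtr_eq0 le_eqVlt ltNge dot_ge0 orbF dot_eq0. Qed.

Lemma enorm_gt0 a : (0 < enorm a) = (a != 0).
Proof. by rewrite lt_neqAle eq_sym enorm_eq0 enorm_ge0 andbT. Qed.

Lemma enorm0 : enorm (0 : 'cV[R]_n) = 0.
Proof. by apply/eqP; rewrite enorm_eq0. Qed.

Lemma enormZ k a : enorm (k *: a) = `|k| * enorm a.
Proof. by rewrite !enormE dotZl dotZr mulrA -expr2 sqrtrM ?sqr_ge0 // sqrtr_sqr. Qed.

Lemma enormN a : enorm (- a) = enorm a.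
Proof. by rewrite -scaleN1r enormZ normrN1 mul1r. Qed.

Lemma dot_le_enorm a b : dot a b <= enorm a * enorm b.
Proof.
have [->|a0] := eqVneq a 0; first by rewrite dotC dot0r enorm0 mul0r.
have [->|b0] := eqVneq b 0; first by rewrite dot0r enorm0 mulr0.
pose w := enorm b *: a - enorm a *: b.
have : 0 <= dot w w := dot_ge0 w.
have -> : dot w w = 2 * (enorm a * enorm b) * (enorm a * enorm b - dot a b).
  by rewrite !(dotBl, dotBr, dotZl, dotZr) -!enorm_sqr (dotC b a); ring.
by rewrite pmulr_rge0 ?mulr_gt0 ?enorm_gt0 // subr_ge0.
Qed.

Lemma ler_norm_dot a b : `|dot a b| <= enorm a * enorm b.
Proof.
rewrite ler_norml dot_le_enorm andbT lerNl -dotNl -(enormN a).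
exact: dot_le_enorm.
Qed.

Lemma enormD a b : enorm (a + b) <= enorm a + enorm b.
Proof.
rewrite -(@ler_pXn2r _ 2) ?nnegrE ?addr_ge0 ?enorm_ge0 //.
rewrite enorm_sqr dotDl !dotDr -!enorm_sqr (dotC b a) sqrrD.
have := dot_le_enorm a b; lra.
Qed.

Lemma ler_dist_enorm a b : `|enorm a - enorm b| <= enorm (a - b).
Proof.
rewrite ler_norml; have := enormD (a - b) b; have := enormD (b - a) a.
by rewrite !subrK -opprB enormN; lra.
Qed.

Lemma enorm_le_mx_norm a : enorm a <= n%:R * `|a|.
Proof.
rewrite -(@ler_pXn2r _ 2) ?nnegrE ?mulr_ge0 ?enorm_ge0 //.
rewrite enorm_sqr exprMn; apply: (@le_trans _ _ (n%:R * `|a| ^+ 2)).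
  have -> : n%:R * `|a| ^+ 2 = \sum_(i < n) `|a| ^+ 2.
    by rewrite sumr_const card_ord mulr_natl.
  rewrite /dot; apply: ler_sum => i _; rewrite -expr2 -real_normK ?num_real //.
  rewrite lerXn2r ?nnegrE // [leRHS]mx_normrE.
  exact: le_bigmax (fun ij => `|a ij.1 ij.2|) (i, 0).
rewrite ler_wpM2r ?sqr_ge0 //; case: n => [|m]; first by rewrite expr0n.
by rewrite -natrX ler_nat expnS leq_pmulr.
Qed.



Lemma enorm_continuous : continuous (@enorm R n 1).
Proof.
apply: (@klipschitz_continuous _ _ _ n%:R) => -[a b] _ /=.
exact: le_trans (ler_dist_enorm a b) (enorm_le_mx_norm _).
Qed.

Lemma dot_continuous (u : 'cV[R]_n) : continuous (dot u).
Proof.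
apply: (@klipschitz_continuous _ _ _ (enorm u * n%:R)) => -[a b] _ /=.
by rewrite -dotBr (le_trans (ler_norm_dot _ _)) // -mulrA ler_wpM2l ?enorm_ge0 ?enorm_le_mx_norm.
Qed.

End EuclideanNorm.

Section OperatorNorm.
Context {R : realType}.

Lemma enorm_mulmx_le m k (A : 'M[R]_(m, k)) (y : 'cV[R]_k) :
  enorm (A *m y) <= enorm A * enorm y.
Proof.
rewrite -(@ler_pXn2r _ 2) ?nnegrE ?mulr_ge0 ?enorm_ge0 //.
rewrite exprMn enorm_sqr [enorm A ^+ 2]sqr_sqrtr; last first.
  by do 2 (apply: sumr_ge0 => ? _); exact: sqr_ge0.
rewrite /dot big_distrl /=; apply: ler_sum => i _.
pose r : 'cV[R]_k := \col_j A i j.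
have -> : (A *m y) i 0 = dot r y by rewrite mxE; apply: eq_bigr => j _; rewrite mxE.
have -> : \sum_j A i j ^+ 2 = enorm r ^+ 2.
  by rewrite enorm_sqr; apply: eq_bigr => j _; rewrite mxE expr2.
rewrite -exprMn -expr2 -real_normK ?num_real // lerXn2r ?nnegrE ?mulr_ge0 ?enorm_ge0 //.
exact: ler_norm_dot.
Qed.

Lemma opnorm_ub m k (A : 'M[R]_(m, k)) (y : 'cV[R]_k) :
  enorm y <= 1 -> enorm (A *m y) <= opnorm A.
Proof.
move=> y_le1; apply: ub_le_sup; last by exists y.
exists (enorm A) => _ [z /= z_le1 <-].
rewrite (le_trans (enorm_mulmx_le A z)) //.
by rewrite -[leRHS]mulr1 ler_wpM2l ?enorm_ge0.
Qed.

Lemma opnorm_ge0 m k (A : 'M[R]_(m, k)) : 0 <= opnorm A.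
Proof. by have := @opnorm_ub _ _ A 0; rewrite mulmx0 !enorm0 => ->. Qed.

Lemma enorm_mulmx_le_opnorm m k (A : 'M[R]_(m, k)) (y : 'cV[R]_k) :
  enorm (A *m y) <= opnorm A * enorm y.
Proof.
have [->|y0] := eqVneq y 0; first by rewrite mulmx0 !enorm0 mulr0.
have y_gt0 : 0 < enorm y by rewrite enorm_gt0.
have := @opnorm_ub _ _ A ((enorm y)^-1 *: y).
rewrite -scalemxAr !enormZ ger0_norm ?invr_ge0 ?enorm_ge0 // mulVf ?gt_eqF //.
by rewrite lexx ler_pdivrMl // mulrC => ->.
Qed.

End OperatorNorm.

Lemma unvec_mxvec_index m n (i : 'I_m) (j : 'I_n) :
  unvec_index (mxvec_index i j) = (i, j).
Proof. by rewrite /unvec_index /mxvec_index cast_ordK enum_rankK. Qed.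

Lemma sum_unvec_index (V : nmodType) m n (F : 'I_m * 'I_n -> V) :
  \sum_(c < m * n) F (unvec_index c) = \sum_(i < m) \sum_(j < n) F (i, j).
Proof.
rewrite (reindex _ (curry_mxvec_bij m n)) pair_big /=.
by apply: eq_bigr => -[i j] _; rewrite unvec_mxvec_index.
Qed.

Lemma enum_prod_ord1l n : enum {: 'I_1 * 'I_n} = [seq (ord0, j) | j <- enum 'I_n].
Proof. by rewrite enumT unlock /= /prod_enum enum_ordSl enum_ord0 /= cats0. Qed.

Lemma enum_prod_ord1r n : enum {: 'I_n * 'I_1} = [seq (i, ord0) | i <- enum 'I_n].
Proof.
rewrite enumT unlock /= /prod_enum enum_ordSl enum_ord0 /=.
by elim: (enum 'I_n) => //= i s ->.
Qed.

Lemma unvec_index_ord1l n (c : 'I_(1 * n)) :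
  unvec_index c = (ord0, cast_ord (mul1n n) c).
Proof.
have c_lt : (c < n)%N by rewrite -{2}(mul1n n).
rewrite /unvec_index (enum_val_nth (ord0, Ordinal c_lt)) enum_prod_ord1l.
rewrite (nth_map (Ordinal c_lt)) ?size_enum_ord //; congr pair.
by apply: val_inj; rewrite /= nth_enum_ord.
Qed.

Lemma unvec_index_ord1r n (c : 'I_(n * 1)) :
  unvec_index c = (cast_ord (muln1 n) c, ord0).
Proof.
have c_lt : (c < n)%N by rewrite -{2}(muln1 n).
rewrite /unvec_index (enum_val_nth (Ordinal c_lt, ord0)) enum_prod_ord1r.
rewrite (nth_map (Ordinal c_lt)) ?size_enum_ord //; congr pair.
by apply: val_inj; rewrite /= nth_enum_ord.
Qed.

Section Kronecker.
Context {R : realType} {n : nat}.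
Implicit Types x y z s : 'cV[R]_n.

Lemma kronvE x y c :
  kronv x y c 0 = x (unvec_index c).1 0 * y (unvec_index c).2 0.
Proof.
rewrite castmxE mxE cast_ord_id.
by case: (unvec_index _) => i j /=; rewrite !ord1.
Qed.

Lemma kronvDl x y z : kronv (x + y) z = kronv x z + kronv y z.
Proof. by apply/matrixP => c j; rewrite (ord1 j) !mxE !kronvE !mxE mulrDl. Qed.

Lemma kronvDr x y z : kronv x (y + z) = kronv x y + kronv x z.
Proof. by apply/matrixP => c j; rewrite (ord1 j) !mxE !kronvE !mxE mulrDr. Qed.

Lemma kron_vI_mul s y : kron_vI s *m y = kronv s y.
Proof.
apply/matrixP => c j; rewrite (ord1 j) kronvE -[in RHS](mul1mx y) !mxE big_distrr.
apply: eq_bigr => k _ /=.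
by rewrite castmxE !mxE unvec_index_ord1l cast_ord_id /= cast_ordKV mulrA.
Qed.

Lemma kron_Iv_mul s y : kron_Iv s *m y = kronv y s.
Proof.
apply/matrixP => c j; rewrite (ord1 j) kronvE -[in RHS](mul1mx y) !mxE big_distrl.
apply: eq_bigr => k _ /=.
by rewrite castmxE !mxE unvec_index_ord1r cast_ord_id /= cast_ordKV mulrAC.
Qed.

Lemma enorm_kronv x y : enorm (kronv x y) = enorm x * enorm y.
Proof.
rewrite !enormE -sqrtrM ?dot_ge0 //; congr Num.sqrt.
rewrite /dot big_distrl; under eq_bigr do rewrite big_distrr.
rewrite -(sum_unvec_index (fun p => x p.1 0 * x p.1 0 * (y p.2 0 * y p.2 0))).
by apply: eq_bigr => c _; rewrite kronvE /=; ring.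
Qed.

End Kronecker.

Section QuadraticField.
Context {R : realType} {n : nat}.
Implicit Types (a s : 'cV[R]_n).

Lemma quadratic_field_shift (F2 : 'M[R]_(n, n * n)) (F1 : 'M[R]_n)
    (F0 : 'cV[R]_n) a s :
  F2 *m kronv (a + s) (a + s) + F1 *m (a + s) + F0 =
  F2s F2 *m kronv a a + F1s F2 F1 s *m a + F0s F2 F1 F0 s.
Proof.
rewrite /F2s /F1s /F0s kronvDl !kronvDr !mulmxDr !mulmxDl -!mulmxA.
rewrite kron_vI_mul kron_Iv_mul.
move: (F2 *m _) (F2 *m _) (F2 *m _) (F2 *m _) (F1 *m a) (F1 *m s) => A B C D E G.
by apply/matrixP => i j; rewrite !mxE; ring.
Qed.

Lemma enorm_quadratic_field_le (A : 'M[R]_(n, n * n)) (B : 'M[R]_n)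
    (c : 'cV[R]_n) a :
  enorm a <= 1 ->
  enorm (A *m kronv a a + B *m a + c) <= opnorm A + opnorm B + enorm c.
Proof.
move=> a_le1; have a_ge0 := enorm_ge0 a.
rewrite (le_trans (enormD _ _)) // lerD2r (le_trans (enormD _ _)) //.
apply: lerD; rewrite (le_trans (enorm_mulmx_le_opnorm _ _)) //.
  rewrite enorm_kronv -[leRHS]mulr1 ler_wpM2l ?opnorm_ge0 //.
  by rewrite -[1]mulr1 ler_pM.
by rewrite -[leRHS]mulr1 ler_wpM2l ?opnorm_ge0.
Qed.

End QuadraticField.

Section MeanValue.
Context {R : realType} {n : nat}.

Lemma is_derive_dot (u : 'cV[R]_n) (f : R -> 'cV[R]_n) t :
  derivable f t 1 -> is_derive t 1 (fun s => dot u (f s)) (dot u ('D_1 f t)).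
Proof.
move=> df; have := continuous_cvg _ (@dot_continuous _ _ u ('D_1 f t)) df.
have -> : dot u \o (fun h : R => h^-1 *: ((f \o shift t) h%:A - f t)) =
    fun h : R => h^-1 *: (((fun s => dot u (f s)) \o shift t) h%:A - dot u (f t)).
  by apply/funext => h; rewrite /= dotZr dotBr.
move=> /(_ _) dfu; apply: DeriveDef; first by apply/cvg_ex; eexists; exact: dfu.
exact: cvg_lim.
Qed.

Lemma enorm_sub_le_mean_value (v : R -> 'cV[R]_n) (a b D : R) : a < b ->
  {within `[a, b], continuous v} ->
  (forall t, a < t < b -> derivable v t 1 /\ enorm ('D_1 v t) <= D) ->
  enorm (v b - v a) <= (b - a) * D.
Proof.
move=> ab v_cont v_deriv; set w := v b - v a.
have [->|w0] := eqVneq w 0.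
  have /v_deriv[_ /(le_trans (enorm_ge0 _)) D_ge0] : a < (a + b) / 2 < b.
    by rewrite !midf_lt.
  by rewrite enorm0 mulr_ge0 // subr_ge0 ltW.
have w_gt0 : 0 < enorm w by rewrite enorm_gt0.
have g_cont : {within `[a, b], continuous (fun s => dot w (v s))}.
  by move=> s; apply: continuous_comp; [exact: v_cont | exact: dot_continuous].
have g_deriv x : x \in `]a, b[%R ->
    is_derive x 1 (fun s => dot w (v s)) (dot w ('D_1 v x)).
  by rewrite in_itv => /v_deriv[dv _]; exact: is_derive_dot.
have [c /[!in_itv] /v_deriv[_ dv_le]] := MVT ab g_deriv g_cont.
rewrite -dotBr -/w -enorm_sqr expr2 mulrC => /(congr1 (fun r => r / enorm w)).
rewrite mulfK ?gt_eqF // => ->.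
rewrite mulrAC [leRHS]mulrC ler_pM2r ?subr_gt0 // ler_pdivrMr // mulrC.
by rewrite (le_trans (dot_le_enorm _ _)) // ler_wpM2l ?enorm_ge0.
Qed.

End MeanValue.

Section APrioriBound.
Context {R : realType} {n : nat}.
Variables (v : R -> 'cV[R]_n) (D : R).
Hypotheses (D_gt0 : 0 < D) (v0 : v 0 = 0)
  (v_cont : {within `[0, +oo[, continuous v})
  (v_deriv : forall t, 0 < t -> derivable v t 1)
  (v_slope : forall t, 0 < t -> enorm (v t) <= 1 -> enorm ('D_1 v t) <= D).

Lemma enorm_le_linear_until_exit t : 0 < t ->
  (forall s, 0 < s < t -> enorm (v s) <= 1) -> enorm (v t) <= t * D.
Proof.
move=> t_gt0 v_le1; have := enorm_sub_le_mean_value t_gt0 (v := v) (D := D).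
rewrite v0 !subr0; apply=> [|s /[dup] /andP[s_gt0 _] /v_le1 vs_le1].
  by apply: continuous_subspaceW v_cont => s /=; rewrite !in_itv /= => /andP[-> _].
by split; [exact: v_deriv | exact: v_slope].
Qed.

Lemma enorm_lt1_before_invD t : 0 <= t < 1 / D -> enorm (v t) < 1.
Proof.
move=> t_in; rewrite ltNge; apply/negP => vt_ge1.
pose S := [set s | 0 <= s < 1 / D /\ 1 <= enorm (v s)].
have S_lb : has_lbound S by exists 0 => s [/andP[]].
pose m := inf S.
have m_le s : S s -> m <= s by move/(ge_inf S_lb).
have m_ge0 : 0 <= m by apply: lb_le_inf => [|s [/andP[]]] //; exists t.
have m_lt : m < 1 / D by rewrite (le_lt_trans (m_le t _)) //; case/andP: t_in.
have below_m s : 0 <= s < m -> enorm (v s) < 1.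
  move=> /andP[s_ge0 s_lt]; rewrite ltNge; apply/negP => vs_ge1.
  have /m_le : S s by split=> //; rewrite s_ge0 (lt_trans s_lt).
  by rewrite leNgt s_lt.
have vm_lt1 : enorm (v m) < 1.
  have [m0|m_neq0] := eqVneq m 0; first by rewrite m0 v0 enorm0.
  have m_gt0 : 0 < m by rewrite lt_neqAle eq_sym m_neq0.
  apply: le_lt_trans (enorm_le_linear_until_exit m_gt0 _) _; last first.
    by rewrite -ltr_pdivlMr.
  by move=> s /andP[s_gt0 s_lt]; rewrite ltW // below_m // ltW.
have vm_cont : {within `[0, +oo[, continuous (fun s => enorm (v s))}.
  by move=> s; apply: continuous_comp; [exact: v_cont | exact: enorm_continuous].
have m_in : `[0, +oo[%classic m by rewrite /= in_itv /= andbT.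
have /subspace_continuousP /(_ m m_in) /cvgr_lt /(_ _ vm_lt1) := vm_cont.
rewrite near_withinE => /nbhs_ballP[d /= d_gt0 near_m].
suff : m + d <= m by rewrite gerDl leNgt d_gt0.
apply: lb_le_inf => [|s Ss]; first by exists t.
rewrite leNgt; apply/negP => s_lt; have := m_le s Ss.
case: Ss => /andP[s_ge0 _] vs_ge1 m_le_s.
have /near_m : ball m d s.
  by rewrite -ball_normE /= ltr_norml; apply/andP; split; lra.
by rewrite in_itv /= s_ge0 ltNge vs_ge1 => /(_ isT).
Qed.

Lemma enorm_le_linear t : 0 <= t < 1 / D -> enorm (v t) <= t * D.
Proof.
move=> /andP[t_ge0 t_lt]; have [->|t_neq0] := eqVneq t 0.
  by rewrite v0 enorm0 mul0r.
have t_gt0 : 0 < t by rewrite lt_neqAle eq_sym t_neq0.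
apply: enorm_le_linear_until_exit => // s /andP[s_gt0 s_lt].
by rewrite ltW // enorm_lt1_before_invD // ltW //= (lt_trans s_lt).
Qed.

End APrioriBound.

Theorem lemma9 (R : realType) (n : nat) (F2 : 'M[R]_(n, n * n))
  (F1 : 'M[R]_n) (F0 : 'cV[R]_n) (x : R -> 'cV[R]_n) :
  {within `[0, +oo[, continuous x} ->
  (forall t : R, 0 < t -> derivable x t 1 /\
     'D_1 x t = F2 *m kronv (x t) (x t)
                + F1 *m x t + F0) ->
  let s := x 0 in
  let v := fun t : R => x t - s in
  let C := opnorm (F2s F2) + opnorm (F1s F2 F1 s) + enorm (F0s F2 F1 F0 s) in
  (forall t : R, 0 < t -> derivable v t 1 /\
     'D_1 v t = F2s F2 *m kronv (v t) (v t)
                + F1s F2 F1 s *m v t + F0s F2 F1 F0 s) /\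
  v 0 = 0 /\
  (exists t' : R, 0 < t' /\ forall t : R, 0 <= t <= t' -> enorm (v t) <= 1) /\
  (0 < C -> forall t : R, 0 <= t < 1 / C ->
     enorm (v t) <= t * C /\ t * C < 1).
Proof.
move=> x_cont x_ode s v C.
have v0 : v 0 = 0 by rewrite /v subrr.
have v_ode t : 0 < t -> derivable v t 1 /\
    'D_1 v t = F2s F2 *m kronv (v t) (v t) + F1s F2 F1 s *m v t + F0s F2 F1 F0 s.
  move=> t_gt0; have [dx Dx] := x_ode t t_gt0.
  have dc : derivable (cst s) t 1 := derivable_cst s t 1.
  have -> : 'D_1 v t = 'D_1 x t by rewrite /v deriveB // derive_cst subr0.
  split; first exact: derivableB.
  by rewrite Dx -quadratic_field_shift /v subrK.
have v_cont : {within `[0, +oo[, continuous v}.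
  by move=> t; apply: continuousB; [exact: x_cont | exact: cst_continuous].
have v_deriv t : 0 < t -> derivable v t 1 by case/v_ode.
have v_slope D : C <= D ->
    forall t, 0 < t -> enorm (v t) <= 1 -> enorm ('D_1 v t) <= D.
  move=> CD t t_gt0 vt_le1; have [_ ->] := v_ode t t_gt0.
  exact: le_trans (enorm_quadratic_field_le _ _ _ vt_le1) CD.
have linear_bound D : 0 < D -> C <= D ->
    forall t, 0 <= t < 1 / D -> enorm (v t) <= t * D.
  by move=> D_gt0 /v_slope; exact: enorm_le_linear.
do 2 split => //; split.
  (* [C + 1] rather than [C], which may vanish. *)
  have C1_gt0 : 0 < C + 1 by rewrite ltr_wpDl // !addr_ge0 ?opnorm_ge0 ?enorm_ge0.
  exists (1 / (2 * (C + 1))); split; first by rewrite divr_gt0 ?mulr_gt0.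
  move=> t /andP[t_ge0]; rewrite ler_pdivlMr ?mulr_gt0 // mulrCA => t_le.
  have t_lt : 0 <= t < 1 / (C + 1) by rewrite t_ge0 ltr_pdivlMr //=; lra.
  have C_le : C <= C + 1 by rewrite lerDl.
  by rewrite (le_trans (linear_bound _ C1_gt0 C_le t t_lt)) //; lra.
move=> C_gt0 t t_in; split; first exact: linear_bound.
by case/andP: t_in => _; rewrite ltr_pdivlMr.
Qed.
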